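(* Let $G$ be a domino-free bipartite graph with color classes $X,Y$ and no universal vertex, and let $\mathcal{L}(G)=(\mathcal{B}(G)\cup\{\bot,\top\},\preceq)$ be its Galois lattice, with meet $\wedge$ and join $\vee$. Then for any $B^1,B^2\in\mathcal{B}(G)$ that are incomparable under $\preceq$, $$B^1\wedge B^2\neq\bot\ \Rightarrow\ B^1\vee B^2=\top \qquad\text{and}\qquad B^1\vee B^2\neq\top\ \Rightarrow\ B^1\wedge B^2=\bot.$$
   Context: A domino is the graph obtained from the chordless cycle $C_6$ by adding a chord between two antipodal vertices; domino-free means no induced domino. A biclique is a vertex set inducing a complete bipartite subgraph, with shores $X(B)=B\cap X$, $Y(B)=B\cap Y$; $\mathcal{B}(G)$ is the set of inclusion-wise maximal bicliques, ordered by $B\preceq B'\iff X(B)\subseteq X(B')$ (equivalently $Y(B)\supseteq Y(B')$). $\mathcal{L}(G)$ adds a bottom $\bot$ with $X(\bot)=\emptyset$, $Y(\bot)=Y$ and a top $\top$ with $X(\top)=X$, $Y(\top)=\emptyset$; this poset is a lattice. A universal vertex is adjacent to all vertices of the opposite color class. *)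

From mathcomp Require Import all_boot.
Set Implicit Arguments. Unset Strict Implicit. Unset Printing Implicit Defensive.

Section Bip.
(* A bipartite graph with colour classes X and Y: vertex type X + Y,
   edges only between the classes, given by adj : X -> Y -> bool. *)
Variables (X Y : finType) (adj : X -> Y -> bool).

Definition vert := (X + Y)%type.

Definition gedge (u v : vert) : bool :=
  match u, v with
  | inl x, inr y => adj x y
  | inr y, inl x => adj x y
  | _, _ => false
  end.

(* the domino on 'I_6: the cycle 0-1-2-3-4-5-0 plus the chord 0-3
   between antipodal vertices *)
Definition domino_edge (i j : 'I_6) : bool :=
  [|| (i.+1 %% 6 == j), (j.+1 %% 6 == i),
      (i == 0 :> nat) && (j == 3 :> nat) | (i == 3 :> nat) && (j == 0 :> nat)].

Definition has_induced_domino : Prop :=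
  exists f : 'I_6 -> vert, injective f /\
    forall i j, gedge (f i) (f j) = domino_edge i j.

Definition domino_free : Prop := ~ has_induced_domino.

Definition universal (v : vert) : bool :=
  match v with
  | inl x => [forall y, adj x y]
  | inr y => [forall x, adj x y]
  end.

Definition no_universal_vertex : Prop := forall v : vert, ~~ universal v.

Definition Xs (B : {set vert}) : {set X} := [set x | inl x \in B].
Definition Ys (B : {set vert}) : {set Y} := [set y | inr y \in B].

Definition biclique (B : {set vert}) : Prop :=
  Xs B != set0 /\ Ys B != set0 /\
  forall x y, x \in Xs B -> y \in Ys B -> adj x y.

Definition max_biclique (B : {set vert}) : Prop :=
  biclique B /\ forall B', biclique B' -> B \subset B' -> B' = B.

Inductive lat_elt := Bot | Top | Bic of {set vert}.

Definition in_lattice (a : lat_elt) : Prop :=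
  match a with
  | Bic B => max_biclique B
  | _ => True
  end.

Definition Xsh (a : lat_elt) : {set X} :=
  match a with
  | Bot => set0
  | Top => setT
  | Bic B => Xs B
  end.

Definition lat_le (a b : lat_elt) : bool := Xsh a \subset Xsh b.

Definition is_meet (a b m : lat_elt) : Prop :=
  in_lattice m /\ lat_le m a /\ lat_le m b /\
  forall c, in_lattice c -> lat_le c a -> lat_le c b -> lat_le c m.

Definition is_join (a b j : lat_elt) : Prop :=
  in_lattice j /\ lat_le a j /\ lat_le b j /\
  forall c, in_lattice c -> lat_le a c -> lat_le b c -> lat_le j c.

End Bip.

(* Suppose the meet and the join of the incomparable maximal bicliques B1, B2
   are both bicliques M and J.  Pick x0 in X(M), so x0 lies in both X-shores,
   and y0 in Y(J), adjacent to every vertex of X(B1) and X(B2).  Take a in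
   X(B1) \ X(B2) and b in X(B2) \ X(B1); by maximality a has a non-neighbour
   y2 in Y(B2) and b a non-neighbour y1 in Y(B1).  Then
   x0 - y1 - a - y0 - b - y2 - x0 with the chord x0 - y0 is an induced domino.
   So one of the two is Bot or Top; the meet cannot be Top because there is
   no universal vertex, and the join cannot be Bot because X-shores of
   bicliques are non-empty. *)
From mathcomp Require Import all_boot.

Set Implicit Arguments.
Unset Strict Implicit.
Unset Printing Implicit Defensive.

Section GaloisLattice.
Variables (X Y : finType) (adj : X -> Y -> bool).

Lemma max_biclique_notin_Xs (B : {set vert X Y}) a :
  max_biclique adj B -> a \notin Xs B -> exists2 y, y \in Ys B & ~~ adj a y.
Proof.
move=> [[nX [nY bc]] maxB] aB.
have [/exists_inP[y yB nay]|/exists_inPn adjB] :=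
  boolP [exists y in Ys B, ~~ adj a y]; first by exists y.
have bcBa : biclique adj (B :|: [set inl a]).
  split; first by apply/set0Pn; exists a; rewrite !inE eqxx orbT.
  split.
    by case/set0Pn: nY => y yB; apply/set0Pn; exists y; move: yB; rewrite !inE => ->.
  move=> x y; rewrite !inE => /orP[xB|/eqP[->]] /orP[yB|//].
    by apply: bc; rewrite inE.
  by move: (adjB y); rewrite inE yB negbK; apply.
by move: aB; rewrite inE -(maxB _ bcBa (subsetUl _ _)) !inE eqxx orbT.
Qed.

Lemma domino_edge_twin_free (i j : 'I_6) :
  (forall k, domino_edge i k = domino_edge j k) -> i = j.
Proof.
move: i j => [[|[|[|[|[|[|i]]]]]] Hi] [[|[|[|[|[|[|j]]]]]] Hj] // twin;
  try exact: val_inj;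
  by [move: (twin (@Ordinal 6 0 isT)) | move: (twin (@Ordinal 6 1 isT))
     | move: (twin (@Ordinal 6 2 isT)) | move: (twin (@Ordinal 6 3 isT))
     | move: (twin (@Ordinal 6 4 isT)) | move: (twin (@Ordinal 6 5 isT))].
Qed.

Lemma induced_domino_of_adj x0 a b y0 y1 y2 :
  adj x0 y0 -> adj x0 y1 -> adj x0 y2 -> adj a y0 -> adj a y1 ->
  adj b y0 -> adj b y2 -> ~~ adj a y2 -> ~~ adj b y1 ->
  has_induced_domino adj.
Proof.
move=> e00 e01 e02 ea0 ea1 eb0 eb2 /negbTE na2 /negbTE nb1.
pose f (i : 'I_6) : vert X Y := match val i with
  | 0 => inl x0 | 1 => inr y1 | 2 => inl a | 3 => inr y0 | 4 => inl b
  | _ => inr y2 end.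
have f_edge : forall i j, gedge adj (f i) (f j) = domino_edge i j.
  move=> [[|[|[|[|[|[|i]]]]]] Hi] [[|[|[|[|[|[|j]]]]]] Hj] //=;
  by rewrite /f /domino_edge /= ?e00 ?e01 ?e02 ?ea0 ?ea1 ?eb0 ?eb2 ?na2 ?nb1.
(* f reflects adjacency and the domino has no twins, so f is injective. *)
exists f; split=> // i j fij; apply: domino_edge_twin_free => k.
by rewrite -!f_edge fij.
Qed.

Lemma incomparable_max_bicliques_domino (B1 B2 : {set vert X Y}) x0 y0 :
  max_biclique adj B1 -> max_biclique adj B2 ->
  ~~ (Xs B1 \subset Xs B2) -> ~~ (Xs B2 \subset Xs B1) ->
  x0 \in Xs B1 -> x0 \in Xs B2 -> {in Xs B1 :|: Xs B2, forall x, adj x y0} ->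
  has_induced_domino adj.
Proof.
move=> mB1 mB2 /subsetPn[a aB1 aB2] /subsetPn[b bB2 bB1] x0B1 x0B2 adj_y0.
have [y2 y2B2 na2] := max_biclique_notin_Xs mB2 aB2.
have [y1 y1B1 nb1] := max_biclique_notin_Xs mB1 bB1.
case: mB1 mB2 => [[_ [_ bc1]] _] [[_ [_ bc2]] _].
apply: (@induced_domino_of_adj x0 a b y0 y1 y2) => //;
  by [apply: bc1 | apply: bc2 | apply: adj_y0; rewrite inE ?x0B1 ?aB1 ?bB2 ?orbT].
Qed.

Lemma biclique_Xs_neq_setT (B : {set vert X Y}) :
  no_universal_vertex adj -> biclique adj B -> ~~ (setT \subset Xs B).
Proof.
move=> nu [_ [/set0Pn[y yB] bc]]; apply: contra (nu (inr y)) => /subsetP Xs_full.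
by apply/forallP => x; apply: bc => //; apply: Xs_full; rewrite inE.
Qed.

End GaloisLattice.

Theorem lemma1 (X Y : finType) (adj : X -> Y -> bool) :
  domino_free adj -> no_universal_vertex adj ->
  forall B1 B2 : {set vert X Y},
    max_biclique adj B1 -> max_biclique adj B2 ->
    ~~ lat_le (Bic B1) (Bic B2) -> ~~ lat_le (Bic B2) (Bic B1) ->
    forall m j : lat_elt X Y,
      is_meet adj (Bic B1) (Bic B2) m -> is_join adj (Bic B1) (Bic B2) j ->
      (m <> Bot X Y -> j = Top X Y) /\ (j <> Top X Y -> m = Bot X Y).
Proof.
move=> df nu B1 B2 mB1 mB2 n12 n21 m j [im [m1 [m2 _]]] [ij [j1 [j2 _]]].
have m_neq_Top : m <> Top X Y.
  by move=> mT; move: m1; rewrite mT; apply/negP/biclique_Xs_neq_setT => //; case: mB1.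
have j_neq_Bot : j <> Bot X Y.
  move=> jB; move: j1; rewrite jB /lat_le /= subset0.
  by case: mB1 => [[/negbTE ->]].
have not_both_bic : forall M J, m = Bic M -> j = Bic J -> False.
  move=> M J mM jJ; move: im m1 m2 ij j1 j2; rewrite mM jJ /lat_le /=.
  move=> [[/set0Pn[x0 x0M] _] _] M1 M2 [[_ [/set0Pn[y0 y0J] bcJ]] _] J1 J2.
  apply: df; apply: (incomparable_max_bicliques_domino mB1 mB2 n12 n21)
    (subsetP M1 _ x0M) (subsetP M2 _ x0M) _ => x.
  by rewrite in_setU => /orP[/(subsetP J1)|/(subsetP J2)] xJ; exact: bcJ xJ y0J.
clear im m1 m2 ij j1 j2.
split=> [m_neq_Bot|j_neq_Top].
- case: j j_neq_Bot not_both_bic => // J _ not_both_bic.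
  by case: m m_neq_Bot m_neq_Top not_both_bic => // M _ _ /(_ M J); case.
- case: m m_neq_Top not_both_bic => // M _ not_both_bic.
  by case: j j_neq_Top j_neq_Bot not_both_bic => // J _ _ /(_ M J); case.
Qed.
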